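(* Let $\mathcal{C}$ be a class of $\Sigma$-algebras. If $\dot\Sigma^*/{\dot\sim_{\mathcal{C}}}$ is finite, then $\mathbf{T}_{\le 1}/{\sim_{\mathcal{C}}}$ is finite.
   Context: $\Sigma$ is a finite algebraic signature and $V$ a non-empty finite set of variables; $\mathbf{T}$ is the set of $\Sigma$-terms over $V$. A $\Sigma$-algebra has a non-empty finite universe and an interpretation of each function symbol; $t \sim_{\mathcal{C}} s$ iff $t$ and $s$ evaluate equally under all valuations in all algebras in $\mathcal{C}$. $\mathrm{vo}(t)$ is the number of variable occurrences in $t$, and $\mathbf{T}_{\le k}=\{t\in\mathbf{T} : \mathrm{vo}(t)\le k\}$. $\dot\Sigma$ is the (possibly infinite) set of characters $f(t_1,\dots,t_{i-1},\_,t_{i+1},\dots,t_n)$ where $f\in\Sigma$ is $n$-ary, $i\in\{1,\dots,n\}$, and each $t_j$ ($j\ne i$) is a term with $\mathrm{vo}(t_j)=0$. For a word $w\in\dot\Sigma^*$ and a term $t$, $w[t]$ is defined by $\varepsilon[t] = t$ and $(f(t_1,\dots,\_,\dots,t_n)\,w')[t] = f(t_1,\dots,t_{i-1},w'[t],t_{i+1},\dots,t_n)$. The equivalence $\dot\sim_{\mathcal{C}}$ on $\dot\Sigma^*$ is: $w\ \dot\sim_{\mathcal{C}}\ w'$ iff $w[a]\sim_{\mathcal{C}} w'[a]$, where $a\in V$ is any variable. *)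

From mathcomp Require Import all_boot.
Set Implicit Arguments. Unset Strict Implicit. Unset Printing Implicit Defensive.

Section Terms.
Variables (F : finType) (ar : F -> nat) (V : finType).

Inductive term : Type :=
| Var : V -> term
| App : forall f : F, ('I_(ar f) -> term) -> term.

Fixpoint vo (t : term) : nat :=
  match t with
  | Var _ => 1
  | App f a => \sum_(i < ar f) vo (a i)
  end.

Record algebra : Type := Algebra {
  carrier : finType;
  carrier_inh : carrier;
  op : forall f : F, ('I_(ar f) -> carrier) -> carrier
}.

Fixpoint eval (A : algebra) (val : V -> carrier A) (t : term) : carrier A :=
  match t with
  | Var x => val x
  | App f a => @op A f (fun i => eval val (a i))
  end.

Definition teq (C : algebra -> Prop) (t s : term) : Prop :=
  forall A : algebra, C A -> forall val : V -> carrier A, eval val t = eval val s.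

(* A character f(t_1,..,t_{i-1},_,t_{i+1},..,t_n): the hole is at position
   ch_i; the argument ch_args ch_i is irrelevant (ignored by plugging);
   all other arguments are ground (vo = 0). *)
Record character : Type := Character {
  ch_f : F;
  ch_i : 'I_(ar ch_f);
  ch_args : 'I_(ar ch_f) -> term;
  ch_ground : forall j, j != ch_i -> vo (ch_args j) = 0
}.

Fixpoint plug (w : seq character) (t : term) : term :=
  match w with
  | [::] => t
  | c :: w' => @App (ch_f c) (fun j => if j == ch_i c then plug w' t else @ch_args c j)
  end.

Definition weq (C : algebra -> Prop) (w w' : seq character) : Prop :=
  forall a : V, teq C (plug w (Var a)) (plug w' (Var a)).

End Terms.

From mathcomp Require Import all_boot.
From Stdlib Require Import FunctionalExtensionality.
Set Implicit Arguments. Unset Strict Implicit. Unset Printing Implicit Defensive.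

(* A term with at most one variable occurrence is w[s] for a word w of
   characters and a seed s, which is either a variable or a nullary symbol:
   descend along the unique argument that may contain the variable, all other
   arguments being ground.  Since plugging respects ~_C, the finitely many
   terms r[s], with r a representative of a class of words and s a seed,
   represent every class of T_{<=1}. *)

Lemma sum_leq1_support1 m (h : 'I_m -> nat) :
  0 < m -> \sum_(i < m) h i <= 1 -> exists i, forall j, j != i -> h j = 0.
Proof.
move=> m_gt0 sum_le1.
have [i hi_neq0 | h_eq0] := pickP (fun i => h i != 0); last first.
  by exists (Ordinal m_gt0) => j _; apply/eqP/negbFE/h_eq0.
exists i => j j_neq_i; apply/eqP; rewrite -leqn0 -(leq_add2l (h i)).
rewrite addn0; apply: (@leq_trans 1); last by rewrite lt0n.
apply: leq_trans sum_le1; rewrite (bigD1 i) //= leq_add2l.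
by rewrite (bigD1 j) //= leq_addr.
Qed.

Section Terms.
Variables (F : finType) (ar : F -> nat) (V : finType).
Notation term := (term ar V).
Notation character := (character ar V).

Lemma eval_ground (A : algebra ar) (val1 val2 : V -> carrier A) (t : term) :
  vo t = 0 -> eval val1 t = eval val2 t.
Proof.
elim: t => [x|f a IH] //= /eqP; rewrite sum_nat_eq0 => /forallP a_ground.
by congr op; apply: functional_extensionality => i; apply/IH/eqP/a_ground.
Qed.

Lemma eval_plug (A : algebra ar) (val1 val2 : V -> carrier A) w (t1 t2 : term) :
  eval val1 t1 = eval val2 t2 -> eval val1 (plug w t1) = eval val2 (plug w t2).
Proof.
move=> eq_t; elim: w => [|c w IH] //=.
congr op; apply: functional_extensionality => j.
by case: eqP => // /eqP j_neq; apply/eval_ground/ch_ground.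
Qed.

Lemma vo_plug w (t : term) : vo (plug w t) = vo t.
Proof.
elim: w => [|c w IH] //=.
rewrite (bigD1 (ch_i c)) //= eqxx IH big1 ?addn0 // => j j_neq.
by rewrite (negbTE j_neq); apply: ch_ground.
Qed.

(* The variable [a] only serves to instantiate the definition of [weq]. *)
Lemma weq_plug C (a : V) (w w' : seq character) (t : term) :
  weq C w w' -> teq C (plug w t) (plug w' t).
Proof.
move=> eq_ww' A CA val.
have eq_t : eval val t = eval (fun=> eval val t) (Var ar a) by [].
by rewrite (eval_plug w eq_t) (eval_plug w' eq_t); apply: eq_ww'.
Qed.

Definition seed : finType := (V + {c : F | ar c == 0})%type.

Section Seeds.
Variable v0 : V.

(* [v0] fills the (empty) argument family of a nullary symbol. *)
Definition seed_term (s : seed) : term :=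
  match s with
  | inl x => Var ar x
  | inr c => App (fun _ : 'I_(ar (val c)) => Var ar v0)
  end.

Lemma vo_seed_term s : vo (seed_term s) <= 1.
Proof. by case: s => [x|[c /= /eqP ->]] //=; rewrite big_ord0. Qed.

Lemma plug_seed_term (t : term) : vo t <= 1 -> exists w s, t = plug w (seed_term s).
Proof.
elim: t => [x|f a IH] /= vo_le1; first by exists [::], (inl x).
have [ar0 | ar_gt0] := posnP (ar f).
  exists [::], (inr (exist _ f (introT eqP ar0))) => /=; congr App.
  by apply: functional_extensionality => i; have := ltn_ord i; rewrite {2}ar0.
have [i a_ground] := sum_leq1_support1 ar_gt0 vo_le1.
have [w [s ai_eq]] : exists w s, a i = plug w (seed_term s).
  move: vo_le1; rewrite (bigD1 i) //= big1 ?addn0 => [/IH //|j /a_ground //].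
exists (Character a_ground :: w), s => /=; congr App.
by apply: functional_extensionality => j; case: eqP => [->|].
Qed.

End Seeds.
End Terms.

Theorem lemma2p11 (F : finType) (ar : F -> nat) (V : finType) (HV : 0 < #|V|)
  (C : algebra ar -> Prop) :
  (exists (n : nat) (r : 'I_n -> seq (character ar V)),
     forall w : seq (character ar V), exists i : 'I_n, weq C w (r i)) ->
  (exists (n : nat) (r : 'I_n -> term ar V),
     (forall i, vo (r i) <= 1) /\
     forall t : term ar V, vo t <= 1 -> exists i : 'I_n, teq C t (r i)).
Proof.
move=> [n [r r_complete]].
have [v0 _] := card_gt0P HV.
pose rep (ks : 'I_n * seed ar V) := plug (r ks.1) (seed_term v0 ks.2).
exists #|{: 'I_n * seed ar V}|, (fun i => rep (enum_val i)).
split=> [i | t vo_t]; first by rewrite vo_plug vo_seed_term.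
have [w [s ->]] := plug_seed_term v0 vo_t.
have [k w_k] := r_complete w.
exists (enum_rank (k, s)); rewrite enum_rankK; exact: (weq_plug v0 _ w_k).
Qed.
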